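(* Let $c\in\mathbb{C}(t)\setminus\{0,1,t\}$ and $F_n$, $P_1$ as in the context. Write $F_n(1,t)=(A_n+O(t),\;t(B_n+O(t)))$ as polynomials in $t$, i.e. $A_n$ is the constant term of the first coordinate of $F_n(1,t)$ and $B_n$ is the coefficient of $t$ in the second coordinate (whose constant term vanishes). Then $A_n=P_1(1,0)^{4^{n-1}}$ for all $n\ge1$, and $\limsup_{n\to\infty}|B_n|^{1/4^{n-1}}\le|P_1(1,0)|$.
   Context: $F_{t_1,t_2}(z,w)=\big((t_1w^2-t_2z^2)^2,\;4t_2zw(w-z)(t_1w-t_2z)\big)$. $C=(c_1,c_2)$ is a pair of coprime homogeneous polynomials in $(t_1,t_2)$ of equal degree with $c(t)=c_1(t,1)/c_2(t,1)$. $F_1=F_{t_1,t_2}(C)/\gcd(F_{t_1,t_2}(C))=(P_1,Q_1)$ (dividing by the gcd of the two coordinates), and $F_{n+1}=F_{t_1,t_2}(F_n)/t_2^2$ (substituting the coordinates of $F_n$ for $(z,w)$); these are pairs of homogeneous polynomials in $(t_1,t_2)$, and $Q_1(1,0)=0$. *)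

From HB Require Import structures.
From mathcomp Require Import all_boot all_order all_algebra.
From mathcomp Require Import complex fraction.
From mathcomp Require Import all_classical all_reals all_analysis.
Set Implicit Arguments. Unset Strict Implicit. Unset Printing Implicit Defensive.
Import Order.TTheory GRing.Theory Num.Theory.
Local Open Scope ring_scope.

(* Bivariate polynomials in (t1,t2) over a commutative ring K are encoded as
   {poly {poly K}}: the outer variable is t2, the inner variable is t1.
   So t1 = 'X%:P and t2 = 'X. *)
Notation bipoly K := {poly {poly K}}.

Definition bt1 {K : comNzRingType} : bipoly K := ('X)%:P.
Definition bt2 {K : comNzRingType} : bipoly K := 'X.

Definition homog {K : comNzRingType} (d : nat) (p : bipoly K) : Prop :=
  forall i j : nat, (p`_j)`_i != 0 -> (i + j)%N = d.

Definition bdvd {K : idomainType} (a b : bipoly K) : Prop :=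
  exists q : bipoly K, b = q * a.
Definition bcoprime {K : idomainType} (a b : bipoly K) : Prop :=
  forall d : bipoly K, bdvd d a -> bdvd d b -> d \is a GRing.unit.

(* evaluation p(a,b) at a point of K^2 *)
Definition beval {K : comNzRingType} (p : bipoly K) (a b : K) : K :=
  (p.[b%:P]).[a].
(* the univariate polynomial t |-> p(1,t) *)
Definition at1t {K : comNzRingType} (p : bipoly K) : {poly K} :=
  map_poly (fun q : {poly K} => q.[1]) p.
(* the dehomogenization t |-> p(t,1) *)
Definition att1 {K : comNzRingType} (p : bipoly K) : {poly K} := p.[1].

Definition Fmap {K : comNzRingType} (zw : bipoly K * bipoly K)
  : bipoly K * bipoly K :=
  let z := zw.1 in let w := zw.2 in
  ((bt1 * w ^+ 2 - bt2 * z ^+ 2) ^+ 2,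
   4%:R * bt2 * z * w * (w - z) * (bt1 * w - bt2 * z)).

Definition Fstep {K : idomainType} (zw : bipoly K * bipoly K)
  : bipoly K * bipoly K :=
  ((Fmap zw).1 %/ bt2 ^+ 2, (Fmap zw).2 %/ bt2 ^+ 2).

(* Fseq F1 n = F_n for n >= 1 (Fseq F1 1 = F1); the value at n = 0 is unused. *)
Definition Fseq {K : idomainType} (F1 : bipoly K * bipoly K) (n : nat)
  : bipoly K * bipoly K := iter n.-1 Fstep F1.

Definition tofr {K : idomainType} (x : K) : {fraction K} := @FracField.tofrac K x.

(* Coprimality keeps c1 and c2 from both vanishing at t2 = 0, and comparing the
   lowest powers of t2 in the two coordinates of F(c1, c2) shows that t2 divides
   the cofactor Q1 = t2 Q'.  Since F(z, t2 w) = t2^2 (G1(z, w), t2 G2(z, w)) for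
   an explicit polynomial map G, we get F_n = (G1, t2 G2) o G^(n-1) (P1, Q'), so
   A_n and B_n are the values at (1, 0) of the coordinates of G^(n-1)(P1, Q').
   At t2 = 0 the map G is (z, w) |-> (z^4, 4 z^2 w (z - w)); with a = P1(1,0)
   this gives A_n = a^(4^(n-1)) and |b_(k+1)| <= 4 |a_k|^2 |b_k| (|b_k| + |a_k|)
   for a_k = a^(4^k).  Then 4 (|a_k| + |b_k|) is at most |a_k|^2 times its own
   square, whence |b_k| <= T^(2^k) |a|^(4^k - 2^k) with T = 4 (|a| + |b_0|),
   and Bernoulli's inequality turns this into |b_k|^(1/4^k) <= |a| + T / 2^k. *)

From HB Require Import structures.
From mathcomp Require Import all_boot all_order all_algebra.
From mathcomp Require Import complex fraction.
From mathcomp Require Import all_classical all_reals all_analysis.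
From mathcomp Require Import ring lra zify.
Set Implicit Arguments.
Unset Strict Implicit.
Unset Printing Implicit Defensive.

Import Order.TTheory GRing.Theory Num.Theory.
Local Open Scope ring_scope.

Lemma mulX_drop_poly1 (K : nzRingType) (p : {poly K}) :
  p`_0 = 0 -> 'X * drop_poly 1 p = p.
Proof.
move=> p0; apply/polyP => -[|i]; rewrite coefXM coef_drop_poly //=.
by rewrite addn1.
Qed.

Lemma coef0_eq0_common_factor (K : idomainType) (g P Q : {poly K}) m :
  (g * P)`_m != 0 -> (forall i, (i <= m)%N -> (g * Q)`_i = 0) -> Q`_0 = 0.
Proof.
move=> gPm gQ0; apply/eqP; apply: contraNT gPm => Q0.
have [n [h h0 eg]] := multiplicity_XsubC g 0.
rewrite subr0 in eg.
have [->|g0] := eqVneq g 0; first by rewrite mul0r coef0.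
have {h0 g0} h0 : h`_0 != 0 by rewrite -horner_coef0; exact: (implyP h0 g0).
have XnM p : g * p = 'X^n * (h * p) by rewrite eg mulrAC mulrC.
have ltmn : (m < n)%N.
  rewrite ltnNge; apply/negP => /gQ0; rewrite XnM coefXnM ltnn subnn coef0M.
  by apply/eqP; rewrite mulf_neq0.
by rewrite XnM coefXnM ltmn.
Qed.

Lemma bcoprime_coef0 (K : idomainType) (c1 c2 : bipoly K) :
  bcoprime c1 c2 -> c1`_0 = 0 -> c2`_0 != 0.
Proof.
move=> cop c10; apply/eqP => c20.
have : (bt2 : bipoly K) \is a GRing.unit.
  by apply: cop; [exists (drop_poly 1 c1) | exists (drop_poly 1 c2)];
    rewrite mulrC mulX_drop_poly1.
by rewrite poly_unitE size_polyX.
Qed.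

Lemma Fmap_cofactor_coef0 (K : idomainType) (c1 c2 g P Q : bipoly K) :
  bcoprime c1 c2 ->
  (Fmap (c1, c2)).1 = g * P -> (Fmap (c1, c2)).2 = g * Q -> Q`_0 = 0.
Proof.
move=> cop eP eQ.
have [c20|c20] := eqVneq c2`_0 0.
- have c10 : c1`_0 != 0.
    by apply/eqP => c10; move: (bcoprime_coef0 cop c10); rewrite c20 eqxx.
  rewrite -(mulX_drop_poly1 c20) /Fmap /bt2 /= in eP eQ.
  set d := drop_poly 1 c2 in eP eQ.
  apply: (@coef0_eq0_common_factor _ g P Q 2).
    rewrite -eP.
    have -> : (bt1 * ('X * d) ^+ 2 - 'X * c1 ^+ 2) ^+ 2
        = 'X^2 * (bt1 * 'X * d ^+ 2 - c1 ^+ 2) ^+ 2 :> bipoly K by ring.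
    rewrite coefXnM ltnn subnn -horner_coef0 !hornerE horner_coef0.
    by rewrite sqrrN -exprM expf_neq0.
  move=> i le_i2; rewrite -eQ.
  have -> : 4%:R * 'X * c1 * ('X * d) * ('X * d - c1) *
      (bt1 * ('X * d) - 'X * c1) =
      'X^3 * (4%:R * c1 * d * ('X * d - c1) * (bt1 * d - c1)) :> bipoly K.
    by ring.
  by rewrite coefXnM ltnS le_i2.
- apply: (@coef0_eq0_common_factor _ g P Q 0).
    rewrite -eP /Fmap -horner_coef0 /bt1 /bt2 !hornerE horner_coef0.
    by rewrite subr0 expf_neq0 // !mulf_neq0 ?polyX_eq0.
  move=> i; rewrite leqn0 => /eqP ->.
  by rewrite -eQ -horner_coef0 /bt2 !hornerE.
Qed.

(* [Fstep] conjugated by (z, w) |-> (z, t2 w), see [Fstep_mulX]. *)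
Definition Gmap {K : comNzRingType} (zw : bipoly K * bipoly K)
  : bipoly K * bipoly K :=
  ((bt1 * bt2 * zw.2 ^+ 2 - zw.1 ^+ 2) ^+ 2,
   4%:R * zw.1 * zw.2 * (bt2 * zw.2 - zw.1) * (bt1 * zw.2 - zw.1)).

Lemma Fstep_mulX (K : idomainType) (z w : bipoly K) :
  Fstep (z, bt2 * w) = ((Gmap (z, w)).1, bt2 * (Gmap (z, w)).2).
Proof.
have X2_monic : (bt2 ^+ 2 : bipoly K) \is monic by rewrite monicXn.
rewrite /Fstep /Fmap /Gmap /=; congr pair.
  rewrite (_ : _ ^+ 2 = (bt1 * bt2 * w ^+ 2 - z ^+ 2) ^+ 2 * bt2 ^+ 2);
    last by ring.
  by rewrite Pdiv.IdomainMonic.mulpK.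
rewrite (_ : 4%:R * _ * _ * _ * _ * _ =
    bt2 * (4%:R * z * w * (bt2 * w - z) * (bt1 * w - z)) * bt2 ^+ 2);
  last by ring.
by rewrite Pdiv.IdomainMonic.mulpK.
Qed.

Lemma iter_Fstep_mulX (K : idomainType) (z w : bipoly K) k :
  iter k Fstep (z, bt2 * w) =
    ((iter k Gmap (z, w)).1, bt2 * (iter k Gmap (z, w)).2).
Proof.
elim: k => [//|k IHk]; rewrite !iterS IHk.
by case: (iter k Gmap (z, w)) => p q; exact: Fstep_mulX.
Qed.

Lemma beval10 (K : comNzRingType) (p : bipoly K) : beval p 1 0 = (p`_0).[1].
Proof. by rewrite /beval polyC0 horner_coef0. Qed.

Lemma at1t_coef0 (K : comNzRingType) (p : bipoly K) :
  (at1t p)`_0 = beval p 1 0.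
Proof. by rewrite /at1t coef_map_id0 ?horner0 // beval10. Qed.

Lemma at1t_mulX_coef1 (K : comNzRingType) (p : bipoly K) :
  (at1t (bt2 * p))`_1 = beval p 1 0.
Proof. by rewrite /at1t coef_map_id0 ?horner0 // coefXM beval10. Qed.

Lemma beval10_Gmap (K : comNzRingType) (zw : bipoly K * bipoly K) :
  let z0 := beval zw.1 1 0 in let w0 := beval zw.2 1 0 in
  beval (Gmap zw).1 1 0 = z0 ^+ 4 /\
  beval (Gmap zw).2 1 0 = 4%:R * z0 ^+ 2 * w0 * (z0 - w0).
Proof.
move=> z0 w0; rewrite /z0 /w0 /beval /Gmap /bt1 /bt2; cbn [fst snd].
rewrite polyC0 -[4%:R : bipoly K]polyC_natr -[4%:R : {poly K}]polyC_natr.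
by split; rewrite ![in LHS]hornerE; [rewrite sqrrN -exprM | ring].
Qed.

Section PowerBounds.
Variable R : realFieldType.
Implicit Types x y a T b : R.

Lemma mulrn_exprn_le_exprD x y m : 0 <= x -> 0 <= y ->
  x ^+ m * y *+ m.+1 <= (x + y) ^+ m.+1.
Proof.
move=> x0 y0; rewrite exprDn (bigD1 (inord 1)) //= inordK // subSS subn0 expr1.
rewrite bin1 lerDl sumr_ge0 // => i _.
by rewrite mulrn_wge0 // mulr_ge0 // exprn_ge0.
Qed.

Lemma iter_sqr_bound a (g : nat -> R) : 0 <= a -> (forall k, 0 <= g k) ->
    (forall k, g k.+1 <= a ^+ (4 ^ k).*2 * g k ^+ 2) ->
  forall k, g k <= g 0 ^+ (2 ^ k) * a ^+ (4 ^ k - 2 ^ k).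
Proof.
move=> a0 g0 gS.
elim=> [|k IHk]; first by rewrite !expn0 subnn expr1 expr0 mulr1.
have gk2 : g k ^+ 2 <= (g 0 ^+ (2 ^ k) * a ^+ (4 ^ k - 2 ^ k)) ^+ 2.
  by rewrite lerXn2r // nnegrE (le_trans (g0 k)).
apply: le_trans (gS k) (le_trans (ler_wpM2l (exprn_ge0 _ a0) gk2) _).
have le24 : (2 ^ k <= 4 ^ k)%N.
  by rewrite -[4%N]/(2 * 2)%N expnMn leq_pmulr // expn_gt0.
rewrite exprMn -!exprM mulrCA -exprD expnSr.
have -> : ((4 ^ k).*2 + (4 ^ k - 2 ^ k) * 2 = 4 ^ k.+1 - 2 ^ k.+1)%N.
  by rewrite !expnS; lia.
by rewrite -expnSr.
Qed.

Lemma quartic_recursion_bound a (b : nat -> R) :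
    0 <= a -> (forall k, 0 <= b k) ->
    (forall k, b k.+1 <= 4%:R * a ^+ (4 ^ k) ^+ 2 * b k * (b k + a ^+ (4 ^ k))) ->
  forall k, b k <= (4%:R * (a + b 0)) ^+ (2 ^ k) * a ^+ (4 ^ k - 2 ^ k).
Proof.
move=> a0 b0 bS n.
pose g k := 4%:R * (a ^+ (4 ^ k) + b k).
have g0 k : 0 <= g k by rewrite mulr_ge0 // addr_ge0 ?exprn_ge0.
have gS k : g k.+1 <= a ^+ (4 ^ k).*2 * g k ^+ 2.
  rewrite /g -addnn exprD expnSr exprM; set u := a ^+ (4 ^ k).
  have u0 : 0 <= u by rewrite exprn_ge0.
  have := bS k; rewrite -/u => bSk.
  have u3b : 0 <= u ^+ 3 * b k by rewrite mulr_ge0 ?exprn_ge0.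
  have u4 : 0 <= u ^+ 4 by rewrite exprn_ge0.
  nra.
have := iter_sqr_bound a0 g0 gS n; rewrite /g expn0 expr1.
by apply: le_trans; have := b0 n; have := exprn_ge0 (4 ^ n) a0; lra.
Qed.

End PowerBounds.

Lemma powR_root_bound (R : realType) (a T b : R) m : (0 < m)%N ->
    0 <= a -> 0 <= T -> 0 <= b -> b <= T ^+ m * a ^+ (m * m - m) ->
  b `^ ((m * m)%:R)^-1 <= a + T / m%:R.
Proof.
move=> m0 a0 T0 b0 bm; set w := a + T / m%:R.
have Tm0 : 0 <= T / m%:R by rewrite divr_ge0.
have Taw : T * a ^+ m.-1 <= w ^+ m.
  have := mulrn_exprn_le_exprD m.-1 a0 Tm0; rewrite prednK //.
  have m0R : (m%:R : R) != 0 by rewrite pnatr_eq0 -lt0n.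
  by rewrite -mulr_natr (_ : _ * _ * _ = T * a ^+ m.-1) //; field.
have bw : b <= w ^+ (m * m).
  apply: (le_trans bm); rewrite exprM.
  have -> : T ^+ m * a ^+ (m * m - m) = (T * a ^+ m.-1) ^+ m.
    by rewrite exprMn -exprM -{2}(prednK m0) mulSn addKn mulnC.
  by rewrite lerXn2r ?nnegrE ?mulr_ge0 ?exprn_ge0 ?addr_ge0.
have mm0 : ((m * m)%:R : R) != 0 by rewrite pnatr_eq0 muln_eq0 orbb -lt0n.
apply: (le_trans (ge0_ler_powR _ _ _ bw));
  rewrite ?nnegrE ?invr_ge0 ?exprn_ge0 //.
  by rewrite addr_ge0.
by rewrite -powR_mulrn ?addr_ge0 // -powRrM mulfV // powRr1 // addr_ge0.
Qed.

Section Limsup.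
Variable R : realType.
Local Open Scope classical_set_scope.
Local Open Scope ereal_scope.

Lemma limn_esup_le_cvg_ub (u v : (\bar R)^nat) (l : \bar R) :
  (\forall n \near \oo, u n <= v n) -> v @ \oo --> l -> limn_esup u <= l.
Proof.
move=> [N _ uv] /cvg_limn_einf_sup[_ <-]; rewrite !limn_esup_lim.
apply: lee_lim; [exact: is_cvg_esups | exact: is_cvg_esups |].
exists N => // n /= Nn; apply: ge_ereal_sup => _ [k nk <-].
apply: (@le_trans _ _ (v k)); last by apply: ereal_sup_ubound; exists k.
by apply: uv; rewrite /= (leq_trans Nn nk).
Qed.

Lemma limn_esup_quartic_root_le (a : R) (b : nat -> R) :
    (0 <= a)%R -> (forall k, 0 <= b k)%R ->
    (forall k,
       b k.+1 <= 4%:R * a ^+ (4 ^ k) ^+ 2 * b k * (b k + a ^+ (4 ^ k)))%R ->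
  limn_esup (fun n => (b n.-1 `^ ((4 ^ n.-1)%:R)^-1)%:E) <= a%:E.
Proof.
move=> a0 b0 bS; set T := (4%:R * (a + b 0))%R.
have T0 : (0 <= T)%R by rewrite mulr_ge0 ?addr_ge0.
have e4 k : (4 ^ k = 2 ^ k * 2 ^ k)%N by rewrite -expnMn.
have rootb k : (b k `^ ((4 ^ k)%:R)^-1 <= a + T / (2 ^ k)%:R)%R.
  rewrite e4; apply: powR_root_bound; rewrite ?expn_gt0 // -e4.
  exact: quartic_recursion_bound.
apply: (@limn_esup_le_cvg_ub _ (fun n => (a + geometric (2 * T) 2^-1 n)%:E)).
  exists 1%N => // -[|k] //= _; rewrite lee_fin (le_trans (rootb k)) //.
  by rewrite exprSr natrX -exprVn (_ : 2 * T * _ = T * 2^-1 ^+ k)%R //; field.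
apply: cvg_EFin; first exact: nearW.
rewrite -[X in _ --> X]addr0; apply: cvgD; first exact: cvg_cst.
by apply: cvg_geometric; rewrite ger0_norm ?invr_ge0 // invf_lt1 // ltr1n.
Qed.

End Limsup.

(* The norm of [R[i]] is complex-valued; [complex.Re `|x|] is its real value. *)
Section ComplexNorm.
Variable R : rcfType.
Implicit Types x y : R[i].

Lemma normcRe x : `|x| = (complex.Re `|x|)%:C%C.
Proof. by rewrite normc_def. Qed.

Lemma Re_normc_ge0 x : 0 <= complex.Re `|x|.
Proof. by rewrite -ler0c -normcRe. Qed.

Lemma Re_normcM x y :
  complex.Re `|x * y| = complex.Re `|x| * complex.Re `|y|.
Proof. by apply: (@complexI R); rewrite rmorphM /= -!normcRe normrM. Qed.

Lemma Re_normcX x n : complex.Re `|x ^+ n| = complex.Re `|x| ^+ n.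
Proof. by apply: (@complexI R); rewrite rmorphXn /= -!normcRe normrX. Qed.

Lemma Re_normc_nat n : complex.Re `|n%:R : R[i]| = n%:R.
Proof. by apply: (@complexI R); rewrite -normcRe normr_nat rmorph_nat. Qed.

Lemma ler_Re_normcB x y :
  complex.Re `|x - y| <= complex.Re `|x| + complex.Re `|y|.
Proof. by rewrite -lecR rmorphD /= -!normcRe ler_normB. Qed.

Lemma ler_Re_normc_quartic x y :
  complex.Re `|4%:R * x ^+ 2 * y * (x - y)| <=
    4%:R * complex.Re `|x| ^+ 2 * complex.Re `|y| *
      (complex.Re `|y| + complex.Re `|x|).
Proof.
rewrite !Re_normcM Re_normc_nat ler_wpM2l ?mulr_ge0 ?Re_normc_ge0 //.
by rewrite (le_trans (ler_Re_normcB _ _)) // addrC.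
Qed.

End ComplexNorm.

Theorem lemma4p2 (R : realType) (d : nat) (c1 c2 : bipoly R[i])
    (g P1 Q1 : bipoly R[i]) :
  homog d c1 -> homog d c2 -> bcoprime c1 c2 ->
  let c : {fraction {poly R[i]}} := tofr (att1 c1) / tofr (att1 c2) in
  c <> 0 -> c <> 1 -> c <> tofr 'X ->
  (Fmap (c1, c2)).1 = g * P1 -> (Fmap (c1, c2)).2 = g * Q1 ->
  bcoprime P1 Q1 ->
  let A := fun n : nat => (at1t (Fseq (P1, Q1) n).1)`_0 in
  let B := fun n : nat => (at1t (Fseq (P1, Q1) n).2)`_1 in
  (forall n : nat, (1 <= n)%N -> A n = beval P1 1 0 ^+ (4 ^ n.-1)) /\
  (limn_esup (fun n : nat =>
      ((complex.Re `|B n|) `^ ((4 ^ n.-1)%:R)^-1)%:E)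
     <= (complex.Re `|beval P1 1 0|)%:E)%E.
Proof.
move=> _ _ cop _ _ _ _ eP eQ _ A B.
have [Q' eQ1] : exists Q', Q1 = bt2 * Q'.
  exists (drop_poly 1 Q1).
  by rewrite mulX_drop_poly1 // (Fmap_cofactor_coef0 cop eP eQ).
set a := beval P1 1 0; pose G k := iter k Gmap (P1, Q').
have FseqE n : Fseq (P1, Q1) n = ((G n.-1).1, bt2 * (G n.-1).2).
  by rewrite /Fseq eQ1 iter_Fstep_mulX.
have GaE k : beval (G k).1 1 0 = a ^+ (4 ^ k).
  elim: k => [|k IHk]; first by rewrite expr1.
  by rewrite /G iterS (beval10_Gmap _).1 -/(G k) IHk -exprM -expnSr.
split=> [n _|]; first by rewrite /A FseqE at1t_coef0 GaE.
under eq_fun => n do rewrite /B FseqE at1t_mulX_coef1.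
pose b k := complex.Re `|beval (G k).2 1 0|.
apply: (limn_esup_quartic_root_le (b := b)).
- exact: Re_normc_ge0.
- by move=> k; exact: Re_normc_ge0.
- move=> k; rewrite /b /G iterS (beval10_Gmap _).2 -/(G k) GaE -Re_normcX.
  exact: ler_Re_normc_quartic.
Qed.
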